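(* Let $(B,\lfloor\cdot,\cdot\rfloor,\|\cdot\|)$ be an SSDB space, $q(b):=\tfrac12\lfloor b,b\rfloor$, and let $f,g\colon B\to\,]{-}\infty,\infty]$ be proper convex lower semicontinuous BC--functions. Suppose $\rho\colon B\to B$ is a continuous linear bijection such that $\lfloor\rho(b),\rho(c)\rfloor=\lfloor b,-c\rfloor$ for all $b,c\in B$. Then $\mathrm{dom}\,f-\rho^{-1}\mathrm{dom}\,g=B\iff{\cal P}_q(f)-\rho^{-1}{\cal P}_q(g)=B$, and $\mathrm{dom}\,f+\rho^{-1}\mathrm{dom}\,g=B\iff{\cal P}_q(f)+\rho^{-1}{\cal P}_q(g)=B$.
   Context: An SSDB space is a triple $(B,\lfloor\cdot,\cdot\rfloor,\|\cdot\|)$ where $B$ is a nonzero real vector space, $\lfloor\cdot,\cdot\rfloor$ a symmetric bilinear form, $(B,\|\cdot\|)$ a Banach space, and there is a linear isometry $\iota$ of $B$ onto $B^*$ with $\langle b,\iota(c)\rangle=\lfloor b,c\rfloor$. $\mathrm{dom}\,f:=\{b\colon f(b)\in\mathbb{R}\}$, $f^@(c):=\sup_b[\lfloor b,c\rfloor-f(b)]$. A BC--function is a proper convex $f$ with $f^@(b)\ge f(b)\ge q(b)$ for all $b$. ${\cal P}_q(f):=\{b\colon f(b)=q(b)\}$. *)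

From HB Require Import structures.
From mathcomp Require Import all_boot all_order all_algebra.
From mathcomp Require Import all_classical all_reals all_analysis.
Set Implicit Arguments. Unset Strict Implicit. Unset Printing Implicit Defensive.
Import Order.TTheory GRing.Theory Num.Theory.
Import numFieldNormedType.Exports.
Local Open Scope classical_set_scope.
Local Open Scope ring_scope.

Section SSDB.
Context {R : realType} {B : completeNormedModType R}.

(* (B, bf, ||.||) is an SSDB space: bf is a symmetric bilinear form and the map
   iota : c |-> bf _ c is a linear isometry of B ONTO the dual B^* (the space of
   continuous linear functionals with the operator norm). *)
Definition is_SSDB (bf : B -> B -> R) : Prop :=
  (exists b : B, b != 0) /\
  [/\ (forall b c, bf b c = bf c b),
      (forall a b c, bf (a + b) c = bf a c + bf b c),
      (forall (k : R) b c, bf (k *: b) c = k * bf b c),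
      (forall c, (forall b, `|bf b c| <= `|c| * `|b|) /\
                 (forall M : R, (forall b, `|bf b c| <= M * `|b|) -> `|c| <= M)) &
      (forall phi : B -> R,
          (forall a b, phi (a + b) = phi a + phi b) ->
          (forall (k : R) b, phi (k *: b) = k * phi b) ->
          continuous phi ->
          exists c, forall b, phi b = bf b c)].

Definition qf (bf : B -> B -> R) (b : B) : R := bf b b / 2.

Local Open Scope ereal_scope.

Definition proper_fun (f : B -> \bar R) : Prop :=
  (forall b, f b != -oo) /\ (exists b, f b != +oo).

Definition convex_fun (f : B -> \bar R) : Prop :=
  forall (a b : B) (t : R), (0 <= t <= 1)%R ->
    f (t *: a + (1 - t) *: b)%R <= t%:E * f a + (1 - t)%:E * f b.

Definition dom (f : B -> \bar R) : set B := [set b | f b \is a fin_num].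

Definition fenchel (bf : B -> B -> R) (f : B -> \bar R) (c : B) : \bar R :=
  ereal_sup [set (bf b c)%:E - f b | b in [set: B]].

Definition BC_fun (bf : B -> B -> R) (f : B -> \bar R) : Prop :=
  [/\ proper_fun f, convex_fun f &
      forall b, fenchel bf f b >= f b /\ f b >= (qf bf b)%:E].

Definition Pq (bf : B -> B -> R) (f : B -> \bar R) : set B :=
  [set b | f b = (qf bf b)%:E].

End SSDB.

Definition set_add {R : realType} {B : completeNormedModType R} (X Y : set B) : set B :=
  [set (x + y)%R | x in X & y in Y].
Definition set_sub {R : realType} {B : completeNormedModType R} (X Y : set B) : set B :=
  [set (x - y)%R | x in X & y in Y].

From HB Require Import structures.
From mathcomp Require Import all_boot all_order all_algebra.
From mathcomp Require Import all_classical all_reals all_analysis.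
From mathcomp Require Import ring lra.
Set Implicit Arguments. Unset Strict Implicit. Unset Printing Implicit Defensive.
Import Order.TTheory GRing.Theory Num.Theory.
Import numFieldNormedType.Exports.
Local Open Scope classical_set_scope.
Local Open Scope ring_scope.

(* Fix c.  The function x |-> inf_y f y - bf y c + g (rho (y - c - x)) is
   convex and at least -q c at 0 (as f >= q and g o rho >= -q); by the domain
   hypothesis and Baire's theorem it is bounded above near 0.  Hahn-Banach
   then gives a continuous linear minorant, i.e. a subgradient at 0, which the
   SSDB structure represents as bf _ e.  The resulting inequality, together
   with f^@ >= f >= q and g^@ >= g >= q, forces f (c + e) = q (c + e) and
   g (rho e) = q (rho e).  Replacing rho by z |-> rho (- z) turns sums into
   differences, and the converse implications hold because P_q(h) is
   contained in dom h. *)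

Section HahnBanach.
Variables (R : realType) (V : lmodType R) (p : V -> R).
Hypothesis p_subadditive : forall x y, p (x + y) <= p x + p y.
Hypothesis p_poshom : forall (t : R) x, 0 < t -> p (t *: x) = t * p x.

Let p0 : p 0 = 0.
Proof. by have := p_poshom 0 (ltr0n R 2); rewrite scaler0; lra. Qed.

Definition dominated_linear_graph (G : set (V * R)) :=
  [/\ forall x a b, G (x, a) -> G (x, b) -> a = b,
      forall x y a b, G (x, a) -> G (y, b) -> G (x + y, a + b),
      forall t x a, G (x, a) -> G (t *: x, t * a) &
      forall x a, G (x, a) -> a <= p x].

Lemma maximal_dominated_linear_graph : exists G,
  dominated_linear_graph G /\ forall G', G `<` G' -> ~ dominated_linear_graph G'.
Proof.
apply: Zorn_bigcup => F FG Ftot.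
have common X Y z w : F X -> F Y -> X z -> Y w -> exists2 Z, F Z & Z z /\ Z w.
  move=> FX FY Xz Yw; case: (Ftot X Y FX FY) => [XY|YX].
    by exists Y => //; split => //; exact: XY.
  by exists X => //; split => //; exact: YX.
split.
- move=> x a b [X FX Xa] [Y FY Yb]; have [Z FZ [Za Zb]] := common _ _ _ _ FX FY Xa Yb.
  by have [h _ _ _] := FG _ FZ; exact: h Za Zb.
- move=> x y a b [X FX Xa] [Y FY Yb]; have [Z FZ [Za Zb]] := common _ _ _ _ FX FY Xa Yb.
  by have [_ h _ _] := FG _ FZ; exists Z => //; exact: h Za Zb.
- by move=> t x a [X FX Xa]; have [_ _ h _] := FG _ FX; exists X => //; exact: h.
- by move=> x a [X FX Xa]; have [_ _ _ h] := FG _ FX; exact: h.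
Qed.

Section OneStepExtension.
Variables (G : set (V * R)) (x0 : V).
Hypothesis G_dominated : dominated_linear_graph G.
Hypothesis G00 : G (0, 0).
Hypothesis x0_notin_dom : ~ exists a, G (x0, a).

Lemma dominated_extension_value : exists al : R,
  (forall y b, G (y, b) -> b - p (y - x0) <= al) /\
  (forall z c, G (z, c) -> al <= p (z + x0) - c).
Proof.
have [_ Gadd _ Gdom] := G_dominated.
pose S := [set yb.2 - p (yb.1 - x0) | yb in G].
have S_le z c : G (z, c) -> forall s, S s -> s <= p (z + x0) - c.
  move=> Gzc _ [[y b] Gyb <-] /=.
  have := Gdom _ _ (Gadd _ _ _ _ Gyb Gzc); have := p_subadditive (y - x0) (z + x0).
  by rewrite addrCA subrK [z + y]addrC; lra.
have S_ne : S !=set0 by exists (0 - p (0 - x0)); exists (0, 0).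
have S_ub : has_ubound S by exists (p (0 + x0) - 0); exact: S_le G00.
exists (sup S); split.
  by move=> y b Gyb; apply: ub_le_sup => //; exists (y, b).
by move=> z c Gzc; apply: ge_sup => // s Ss; exact: S_le Gzc _ Ss.
Qed.

Lemma dominated_linear_graph_extension :
  exists2 G', dominated_linear_graph G' & G `<` G'.
Proof.
have [Gfun Gadd Gscal Gdom] := G_dominated.
have [al [al_ge al_le]] := dominated_extension_value.
pose G' := [set z | exists x a t, G (x, a) /\ z = (x + t *: x0, a + t * al)].
exists G'; last first.
  split.
    by move=> [x a] Gxa; exists x, a, 0; rewrite scale0r mul0r !addr0.
  have G'x0 : G' (x0, al) by exists 0, 0, 1; rewrite scale1r mul1r !add0r.
  by move=> /(_ _ G'x0) Gx0; apply: x0_notin_dom; exists al.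
split.
- move=> x a b [y [c [t [Gyc [-> ->]]]]] [y' [c' [t' [Gyc' [yy' ->]]]]].
  have [tt'|tt'] := eqVneq t t'.
    move: yy'; rewrite -tt' => /addIr yy'; rewrite -yy' in Gyc'.
    by rewrite (Gfun _ _ _ Gyc Gyc').
  exfalso; apply: x0_notin_dom; exists ((t - t')^-1 * (c' - c)).
  have := Gscal (t - t')^-1 _ _ (Gadd _ _ _ _ Gyc' (Gscal (-1) _ _ Gyc)).
  suff -> : (t - t')^-1 *: (y' + (-1) *: y) = x0 by rewrite mulN1r.
  have -> : y' + (-1) *: y = (t - t') *: x0.
    by rewrite scaleN1r scalerBl -[y'](addrK (t' *: x0)) -yy' addrAC [y + _]addrC addrK.
  by rewrite scalerA mulVf ?scale1r // subr_eq0.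
- move=> x y a b [x1 [a1 [t1 [G1 [-> ->]]]]] [x2 [a2 [t2 [G2 [-> ->]]]]].
  exists (x1 + x2), (a1 + a2), (t1 + t2); split; first exact: Gadd.
  by rewrite scalerDl mulrDl; congr (_, _); rewrite addrACA.
- move=> s x a [x1 [a1 [t1 [G1 [-> ->]]]]].
  exists (s *: x1), (s * a1), (s * t1); split; first exact: Gscal.
  by rewrite scalerDr mulrDr scalerA mulrA.
- move=> x a [y [c [t [Gyc [-> ->]]]]].
  have [t0|t0|->] := ltgtP t 0; last by rewrite scale0r mul0r !addr0; exact: Gdom.
  + have tN : 0 < - t by rewrite oppr_gt0.
    have := al_ge _ _ (Gscal (- t)^-1 _ _ Gyc).
    have -> : p (y + t *: x0) = - t * p ((- t)^-1 *: y - x0).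
      rewrite -p_poshom // scalerBr scalerA mulfV ?gt_eqF // scale1r.
      by rewrite scaleNr opprK.
    rewrite -(ler_pM2l tN) mulrBr mulrA mulfV ?gt_eqF // mul1r; lra.
  + have := al_le _ _ (Gscal t^-1 _ _ Gyc).
    have -> : p (y + t *: x0) = t * p (t^-1 *: y + x0).
      by rewrite -p_poshom // scalerDr scalerA mulfV ?gt_eqF // scale1r.
    rewrite -(ler_pM2l t0) mulrBr mulrA mulfV ?gt_eqF // mul1r; lra.
Qed.

End OneStepExtension.

Lemma hahn_banach : exists l : V -> R,
  [/\ forall x y, l (x + y) = l x + l y,
      forall (t : R) x, l (t *: x) = t * l x &
      forall x, l x <= p x].
Proof.
have [G [G_dom Gmax]] := maximal_dominated_linear_graph.
have [Gfun Gadd Gscal Gdom] := G_dom.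
have G00 : G (0, 0).
  apply: contrapT => nG; apply: (Gmax [set (0, 0)]).
    split; last by move=> h; apply: nG; apply: h.
    by move=> [x a] Gxa; have := Gscal 0 _ _ Gxa; rewrite scale0r mul0r.
  split => /=.
  - by move=> x a b [-> ->] [->].
  - by move=> x y a b [-> ->] [-> ->]; rewrite !addr0.
  - by move=> t x a [-> ->]; rewrite scaler0 mulr0.
  - by move=> x a [-> ->]; rewrite p0.
have Gtotal x : exists a, G (x, a).
  apply: contrapT => nGx.
  by have [G' G'dom GG'] := dominated_linear_graph_extension G_dom G00 nGx; exact: Gmax GG' G'dom.
pose l x := projT1 (cid (Gtotal x)).
have Gl x : G (x, l x) by rewrite /l; case: cid.
exists l; split.
- by move=> x y; apply: Gfun (Gl _) (Gadd _ _ _ _ (Gl x) (Gl y)).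
- by move=> t x; apply: Gfun (Gl _) (Gscal t _ _ (Gl x)).
- by move=> x; exact: Gdom (Gl x).
Qed.

End HahnBanach.

Lemma linear_continuous_of_ball_bound (R : realType) (V : normedModType R) (l : V -> R)
  (r K : R) :
  (forall x y, l (x + y) = l x + l y) -> (forall (t : R) x, l (t *: x) = t * l x) ->
  0 < r -> (forall x, `|x| < r -> `|l x| <= K) -> continuous l.
Proof.
move=> ladd lscal r0 lK.
have l_linear : linear l by move=> t x y; rewrite ladd lscal.
pose L : {linear V -> R} := HB.pack l (GRing.isLinear.Build _ _ _ _ l l_linear).
apply: (@bounded_linear_continuous _ _ _ L).
by apply/ex_bound; exists K; apply/nbhs_normP; exists r => // x /=; rewrite sub0r normrN; exact: lK.
Qed.

Section SubgradientAtZero.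
Variables (R : realType) (V : normedModType R) (E : V -> R -> Prop) (v0 r M : R).
Hypothesis E_convex : forall x1 x2 a1 a2 t, 0 <= t <= 1 -> E x1 a1 -> E x2 a2 ->
  E (t *: x1 + (1 - t) *: x2) (t * a1 + (1 - t) * a2).
Hypothesis E_ge_at0 : forall a, E 0 a -> v0 <= a.
Hypothesis r_gt0 : 0 < r.
Hypothesis E_ball : forall x, `|x| < r -> E x M.

(* [E] is the epigraph of a convex function bounded above by [M] on a ball
   around [0]; [ddir] is its directional derivative at [0] (shifted to the
   value bound [v0]), which is sublinear. *)
Let dquot x := [set z | exists t a, [/\ 0 < t, E (t *: x) a & z = (a - v0) / t]].
Let ddir x := inf (dquot x).

Let step (x : V) := r / (2 * (`|x| + 1)).

Let step_gt0 x : 0 < step x.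
Proof. by rewrite divr_gt0 // mulr_gt0 // ltr_wpDl. Qed.

Let step_in_ball x : `|step x *: x| < r.
Proof.
rewrite normrZ gtr0_norm ?step_gt0 // /step -mulrA gtr_pMr // mulrC.
by rewrite ltr_pdivrMr ?mulr_gt0 ?ltr_wpDl // mul1r; have := normr_ge0 x; lra.
Qed.

Let dquot_neq0 x : dquot x !=set0.
Proof. by exists ((M - v0) / step x); exists (step x), M; split => //; exact: E_ball. Qed.

(* Convexity on the segment from [t x] to [- (step x) x] through [0]. *)
Let dquot_lbound x : lbound (dquot x) ((v0 - M) / step x).
Proof.
move=> _ [t [a [t0 Eta ->]]].
set s := step x; have s0 : 0 < s := step_gt0 x.
have Es : E ((- s) *: x) M by apply: E_ball; rewrite scaleNr normrN; exact: step_in_ball.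
have st0 : 0 < s + t by rewrite addr_gt0.
have l01 : 0 <= s / (s + t) <= 1.
  apply/andP; split; first by rewrite divr_ge0 // ltW.
  by rewrite ler_pdivrMr // mul1r lerDl ltW.
have := E_convex l01 Eta Es.
rewrite !scalerA -scalerDl (_ : s / (s + t) * t + (1 - s / (s + t)) * - s = 0); last first.
  by field; rewrite gt_eqF.
rewrite scale0r => /E_ge_at0 /(ler_wpM2l (ltW st0)).
rewrite (_ : (s + t) * (s / (s + t) * a + (1 - s / (s + t)) * M) = s * a + t * M) => [h|]; last first.
  by field; rewrite gt_eqF.
by rewrite ler_pdivrMr // mulrAC ler_pdivlMr //; nra.
Qed.

Let ddir_le x z : dquot x z -> ddir x <= z.
Proof. by move=> xz; apply: ge_inf => //; exists ((v0 - M) / step x); exact: dquot_lbound. Qed.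

Let ddir_ge x w : (forall z, dquot x z -> w <= z) -> w <= ddir x.
Proof. by move=> h; apply: lb_le_inf. Qed.

Let dquotD x y z1 z2 : dquot x z1 -> dquot y z2 -> dquot (x + y) (z1 + z2).
Proof.
move=> [s [a [s0 Esa ->]]] [t [b [t0 Etb ->]]].
have st0 : 0 < s + t by rewrite addr_gt0.
have l01 : 0 <= t / (s + t) <= 1.
  apply/andP; split; first by rewrite divr_ge0 // ltW.
  by rewrite ler_pdivrMr // mul1r lerDr ltW.
have := E_convex l01 Esa Etb.
rewrite !scalerA (_ : t / (s + t) * s = s * t / (s + t)); last by field; rewrite gt_eqF.
rewrite (_ : (1 - t / (s + t)) * t = s * t / (s + t)); last by field; rewrite gt_eqF.
rewrite -scalerDr => h.
exists (s * t / (s + t)), (t / (s + t) * a + (1 - t / (s + t)) * b); split => //.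
  by rewrite !mulr_gt0 // invr_gt0.
by field; rewrite !gt_eqF.
Qed.

Let ddir_subadditive x y : ddir (x + y) <= ddir x + ddir y.
Proof.
have h z2 : dquot y z2 -> ddir (x + y) - z2 <= ddir x.
  by move=> yz2; apply: ddir_ge => z1 xz1; have := ddir_le (dquotD xz1 yz2); lra.
suff : ddir (x + y) - ddir x <= ddir y by lra.
by apply: ddir_ge => z2 yz2; have := h _ yz2; lra.
Qed.

Let ddir_poshom (c : R) x : 0 < c -> ddir (c *: x) = c * ddir x.
Proof.
move=> c0.
have dquotZ z : dquot x z -> dquot (c *: x) (c * z).
  move=> [t [a [t0 Eta ->]]]; exists (t / c), a; split.
  - by rewrite divr_gt0.
  - by rewrite scalerA mulfVK // gt_eqF.
  - by field; rewrite !gt_eqF.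
have dquotZV z : dquot (c *: x) z -> dquot x (z / c).
  move=> [t [a [t0 Eta ->]]]; exists (t * c), a; split.
  - by rewrite mulr_gt0.
  - by rewrite -scalerA.
  - by field; rewrite !gt_eqF.
apply/eqP; rewrite eq_le; apply/andP; split.
  rewrite -ler_pdivrMl //; apply: ddir_ge => z xz.
  by rewrite ler_pdivrMl //; apply: ddir_le; exact: dquotZ.
apply: ddir_ge => z cxz.
by rewrite -ler_pdivlMl // mulrC; apply: ddir_le; exact: dquotZV.
Qed.

Lemma subgradient_at_zero : exists l : V -> R,
  [/\ forall x y, l (x + y) = l x + l y,
      forall (t : R) x, l (t *: x) = t * l x,
      continuous l &
      forall x a, E x a -> v0 + l x <= a].
Proof.
have [l [ladd lscal l_le]] := hahn_banach ddir_subadditive ddir_poshom.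
have l_minor x a : E x a -> v0 + l x <= a.
  move=> Exa; have := l_le x.
  have : ddir x <= (a - v0) / 1 by apply: ddir_le; exists 1, a; rewrite scale1r.
  by rewrite divr1; lra.
exists l; split => //.
apply: (linear_continuous_of_ball_bound ladd lscal r_gt0 (K := M - v0)) => x nx.
have := l_minor _ _ (E_ball nx).
have : `|- x| < r by rewrite normrN.
move/E_ball/l_minor; rewrite -scaleN1r lscal.
by rewrite ler_norml; lra.
Qed.

End SubgradientAtZero.

Definition is_convex_set (R : realType) (V : lmodType R) (C : set V) :=
  forall a b (t : R), 0 <= t <= 1 -> C a -> C b -> C (t *: a + (1 - t) *: b).

Lemma convex_comb_subr (R : realType) (V : lmodType R) (a1 a2 c : V) (t : R) :
  t *: a1 + (1 - t) *: a2 - c = t *: (a1 - c) + (1 - t) *: (a2 - c).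
Proof. by rewrite !scalerBr addrACA -opprD -scalerDl subrKC scale1r. Qed.

Section HalfPowers.
Variables (R : realType) (B : completeNormedModType R).

Definition halfpow (k : nat) : R := 2^-1 ^+ k.

Lemma halfpow_gt0 k : 0 < halfpow k.
Proof. by rewrite exprn_gt0 // invr_gt0. Qed.

Lemma halfpowS k : halfpow k.+1 = halfpow k / 2.
Proof. by rewrite /halfpow exprS mulrC. Qed.

Lemma halfpow_small eps : 0 < eps -> exists n, forall k, (n <= k)%N -> halfpow k < eps.
Proof.
move=> e0; have : (GRing.exp (2^-1 : R) : R ^nat) @ \oo --> 0.
  by apply: cvg_expr; rewrite ger0_norm ?invr_ge0 // invf_lt1 // ltr1n.
move/cvgrPdist_lt => /(_ _ e0) [n _ Hn]; exists n => k nk.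
by have := Hn k nk; rewrite /= sub0r normrN ger0_norm // ltW // halfpow_gt0.
Qed.

Lemma cvg_halfpow_cauchy (u : nat -> B) c :
  (forall k j, `|u (k + j)%N - u k| <= c * halfpow k) -> cvg (u @ \oo).
Proof.
move=> uC; apply: cauchy_cvg; apply: cauchy_exP => eps e0.
have c0 : 0 <= c by have := uC 0%N 0%N; rewrite addn0 subrr normr0 /halfpow expr0 mulr1.
have [n Hn] := halfpow_small (divr_gt0 e0 (ltr_wpDl c0 ltr01)).
exists (u n); rewrite /fmapE -ball_normE /ball_; exists n => // m nm /=.
rewrite distrC -(subnKC nm); apply: (le_lt_trans (uC _ _)).
have := Hn n (leqnn n); rewrite ltr_pdivlMr ?ltr_wpDl //.
by have := halfpow_gt0 n; nra.
Qed.

Lemma cvg_halfpow_close (u w : nat -> B) (L : B) c : u @ \oo --> L ->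
  (forall k, `|w k - u k| <= c * halfpow k) -> w @ \oo --> L.
Proof.
move=> /cvgrPdist_lt uL wu; apply/cvgrPdist_lt => eps e0.
have c0 : 0 <= c by have := wu 0%N; rewrite /halfpow expr0 mulr1; apply: le_trans.
have e2 : 0 < eps / 2 by rewrite divr_gt0.
have [n Hn] := halfpow_small (divr_gt0 e2 (ltr_wpDl c0 ltr01)).
have [m _ Hm] := uL _ e2.
exists (maxn n m) => // k /=; rewrite geq_max => /andP[nk mk].
have h1 := Hm k mk; have h2 := wu k; have h3 := Hn k nk.
rewrite ltr_pdivlMr ?ltr_wpDl // in h3; rewrite distrC in h2.
have : `|L - w k| <= `|L - u k| + `|u k - w k|.
  by rewrite (le_trans _ (ler_normD _ _)) // addrA subrK.
by have := halfpow_gt0 k; nra.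
Qed.

Section HalfSeries.
Variables (C : set B) (N : R) (T V : nat -> B).
Hypothesis C_convex : is_convex_set C.
Hypothesis C_closed : closed C.
Hypothesis C_bounded : forall y, C y -> `|y| <= N.
Hypothesis V_in : forall k, C (V k).
Hypothesis T0 : T 0%N = 0.
Hypothesis TS : forall k, T k.+1 = T k + (halfpow k / 2) *: V k.

Lemma halfseries_cauchy k j : `|T (k + j)%N - T k| <= N * halfpow k.
Proof.
have N0 : 0 <= N by apply: le_trans (C_bounded (V_in 0%N)).
suff : `|T (k + j)%N - T k| <= N * (halfpow k - halfpow (k + j)).
  by move/le_trans; apply; apply: ler_wpM2l => //; have := halfpow_gt0 (k + j); lra.
elim: j => [|j IH]; first by rewrite addn0 !subrr normr0 mulr0.
rewrite addnS TS halfpowS (addrAC (T (k + j)%N)).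
apply: (le_trans (ler_normD _ _)).
rewrite normrZ ger0_norm; last by rewrite divr_ge0 // ltW // halfpow_gt0.
have e0 := halfpow_gt0 (k + j)%N.
by have := ler_wpM2l (divr_ge0 (ltW e0) (ler0n R 2)) (C_bounded (V_in (k + j)%N)); lra.
Qed.

(* [T k] is a combination of points of [C] with total weight [1 - halfpow k]. *)
Lemma halfseries_complete_in k q : C q -> C (T k + halfpow k *: q).
Proof.
elim: k q => [|k IH] q Cq; first by rewrite T0 add0r /halfpow expr0 scale1r.
have half01 : 0 <= (2^-1 : R) <= 1 by rewrite invr_ge0 ler0n /= invf_le1 // ler1n.
have := IH _ (C_convex half01 (V_in k) Cq).
rewrite scalerDr !scalerA TS halfpowS -addrA.
by rewrite (_ : halfpow k * (1 - 2^-1) = halfpow k / 2) //; field.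
Qed.

Lemma halfseries_limit_in : exists2 L, T @ \oo --> L & C L.
Proof.
have cvT : cvg (T @ \oo) := cvg_halfpow_cauchy halfseries_cauchy.
exists (lim (T @ \oo)) => //.
apply: (@closed_cvg nat B \oo _ (fun k => T k + halfpow k *: V 0%N) C C_closed).
  by apply: nearW => k; apply: halfseries_complete_in.
apply: (cvg_halfpow_close cvT (c := N)) => k.
rewrite addrC addKr normrZ ger0_norm ?(ltW (halfpow_gt0 k)) // [N * _]mulrC.
by apply: ler_wpM2l; [exact/ltW/halfpow_gt0 | exact: C_bounded].
Qed.

End HalfSeries.

(* The iteration behind the open mapping theorem: approximate solvability of
   [x = y - z] in a ball forces exact solvability in the half ball. *)
Lemma diff_contains_ball_of_approx (C1 C2 : set B) (rho N : R) :
  0 < rho -> is_convex_set C1 -> is_convex_set C2 -> closed C1 -> closed C2 ->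
  (forall y, C1 y -> `|y| <= N) -> (forall z, C2 z -> `|z| <= N) ->
  (forall w, `|w| < rho -> exists y z, [/\ C1 y, C2 z & `|w - (y - z)| < rho / 2]) ->
  forall x, `|x| < rho / 2 -> exists y z, [/\ C1 y, C2 z & x = y - z].
Proof.
move=> rho0 cv1 cv2 cl1 cl2 b1 b2 approx x nx.
have [h hP] : {h : B -> B * B & forall w, `|w| < rho ->
    [/\ C1 (h w).1, C2 (h w).2 & `|w - ((h w).1 - (h w).2)| < rho / 2]}.
  apply: (@choice B (B * B) (fun w yz => `|w| < rho ->
     [/\ C1 yz.1, C2 yz.2 & `|w - (yz.1 - yz.2)| < rho / 2])) => w.
  have [wr|nwr] := pselect (`|w| < rho); last by exists (0, 0).
  by have [y [z [? ? ?]]] := approx w wr; exists (y, z).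
(* The residual after [k] steps is rescaled into the ball of radius [rho]
   and corrected by its approximate solution, shrunk by [halfpow k / 2]. *)
pose fix S k := if k is k.+1 then
    let w := (2 / halfpow k) *: (x - ((S k).1 - (S k).2)) in
    ((S k).1 + (halfpow k / 2) *: (h w).1, (S k).2 + (halfpow k / 2) *: (h w).2)
  else (0, 0).
pose res k := x - ((S k).1 - (S k).2).
pose W k := (2 / halfpow k) *: res k.
pose Y k := (h (W k)).1.
pose Z k := (h (W k)).2.
have SS k : S k.+1 = ((S k).1 + (halfpow k / 2) *: Y k, (S k).2 + (halfpow k / 2) *: Z k).
  by [].
have W_small k : `|res k| < rho * halfpow k / 2 -> `|W k| < rho.
  have ek := halfpow_gt0 k; rewrite /W normrZ ger0_norm ?divr_ge0 ?ltW // => rk.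
  rewrite -[X in _ < X](_ : 2 / halfpow k * (rho * halfpow k / 2) = rho); last first.
    by field; rewrite gt_eqF.
  by rewrite ltr_pM2l // divr_gt0.
have res_small k : `|res k| < rho * halfpow k / 2.
  elim: k => [|k IH]; first by rewrite /res /= subrr subr0 /halfpow expr0 mulr1.
  have ek := halfpow_gt0 k; have [_ _ HW] := hP _ (W_small _ IH).
  have -> : res k.+1 = (halfpow k / 2) *: (W k - (Y k - Z k)).
    rewrite scalerBr /W scalerA (_ : halfpow k / 2 * (2 / halfpow k) = 1); last first.
      by field; rewrite gt_eqF.
    by rewrite scale1r /res SS /= scalerBr (opprD (S k).2) addrACA opprD addrA.
  rewrite normrZ ger0_norm ?divr_ge0 ?ltW // halfpowS.
  rewrite (_ : rho * (halfpow k / 2) / 2 = halfpow k / 2 * (rho / 2)); last by field.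
  by rewrite ltr_pM2l // divr_gt0.
have [Y_in Z_in] : (forall k, C1 (Y k)) /\ (forall k, C2 (Z k)).
  by split=> k; have [] := hP _ (W_small _ (res_small k)).
have [P cP C1P] := halfseries_limit_in cv1 cl1 b1 Y_in (T := fun k => (S k).1) erefl (fun k => erefl).
have [Q cQ C2Q] := halfseries_limit_in cv2 cl2 b2 Z_in (T := fun k => (S k).2) erefl (fun k => erefl).
exists P, Q; split => //.
have : (fun _ : nat => x) @ \oo --> P - Q.
  apply: (cvg_halfpow_close (cvgB cP cQ) (c := rho / 2)) => k.
  by rewrite mulrAC; exact/ltW/res_small.
exact: cvg_unique (cvg_cst x).
Qed.

End HalfPowers.

Section SublevelDifference.
Variables (R : realType) (B : completeNormedModType R).

Definition bounded_sublevel (phi : B -> \bar R) (n : R) : set B :=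
  [set y | (phi y <= n%:E)%E /\ `|y| <= n].

Lemma bounded_sublevel_convex phi n : convex_fun phi -> is_convex_set (bounded_sublevel phi n).
Proof.
move=> cphi a b t /andP[t0 t1] [pa na] [pb nb]; have t0' : 0 <= 1 - t by lra.
split.
  apply: (le_trans (cphi a b t _)); first by rewrite t0 t1.
  rewrite (_ : n%:E = t%:E * n%:E + (1 - t)%:E * n%:E)%E; last first.
    by rewrite -!EFinM -EFinD; congr (_%:E); ring.
  by apply: leeD; apply: lee_wpmul2l.
apply: (le_trans (ler_normD _ _)); rewrite !normrZ !ger0_norm //.
by rewrite (_ : n = t * n + (1 - t) * n); [apply: lerD; exact: ler_wpM2l | ring].
Qed.

Lemma bounded_sublevel_closed phi n : lower_semicontinuous phi ->
  closed (bounded_sublevel phi n).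
Proof.
move=> /lower_semicontinuousP lsc.
have -> : bounded_sublevel phi n =
    ~` [set y | (n%:E < phi y)%E] `&` (Num.norm @^-1` [set r | r <= n]).
  apply/seteqP; split => y [h1 h2]; split => //=.
    by apply/negP; rewrite -leNgt.
  by rewrite leNgt; apply/negP.
apply: closedI; first by rewrite -openC setCK.
by apply: preimage_closed; [move=> x _; exact: norm_continuous | exact: closed_le].
Qed.

Lemma bounded_sublevel_le phi n m : (n <= m)%N ->
  bounded_sublevel phi n%:R `<=` bounded_sublevel phi m%:R.
Proof.
move=> nm y [h1 h2]; have nm' : n%:R <= m%:R :> R by rewrite ler_nat.
by split; [apply: (le_trans h1); rewrite lee_fin | exact: le_trans nm'].
Qed.

Variables (phi1 phi2 : B -> \bar R).
Hypotheses (phi1_convex : convex_fun phi1) (phi2_convex : convex_fun phi2).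
Hypotheses (phi1_lsc : lower_semicontinuous phi1) (phi2_lsc : lower_semicontinuous phi2).
Hypothesis dom_diff : forall x, exists y z,
  [/\ x = y - z, phi1 y \is a fin_num & phi2 z \is a fin_num].

Let K n := [set x | exists y z,
  [/\ bounded_sublevel phi1 n%:R y, bounded_sublevel phi2 n%:R z & x = y - z]].

Let K_le n m : (n <= m)%N -> K n `<=` K m.
Proof.
move=> nm x [y [z [h1 h2 ->]]].
by exists y, z; split; [exact: bounded_sublevel_le h1 | exact: bounded_sublevel_le h2 |].
Qed.

Let K_convex n : is_convex_set (K n).
Proof.
move=> a b t t01 [y1 [z1 [a1 a2 ->]]] [y2 [z2 [b1 b2 ->]]].
exists (t *: y1 + (1 - t) *: y2), (t *: z1 + (1 - t) *: z2); split.
- exact: bounded_sublevel_convex.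
- exact: bounded_sublevel_convex.
- by rewrite !scalerBr opprD addrACA.
Qed.

Let K_cover x : exists n, K n x.
Proof.
have [y [z [-> fy fz]]] := dom_diff x.
pose M := Num.max (Num.max `|fine (phi1 y)| `|fine (phi2 z)|) (Num.max `|y| `|z|).
have Mn : M <= (Num.truncn M).+1%:R by exact/ltW/truncnS_gt.
have leM u : u <= `|u| -> `|u| <= M -> u <= (Num.truncn M).+1%:R.
  by move=> uu uM; apply: le_trans Mn; exact: le_trans uM.
exists (Num.truncn M).+1, y, z; split => //; split.
- by rewrite -(fineK fy) lee_fin; apply: leM (ler_norm _) _; rewrite /M !le_max lexx.
- by apply: le_trans Mn; rewrite /M !le_max lexx !orbT.
- by rewrite -(fineK fz) lee_fin; apply: leM (ler_norm _) _; rewrite /M !le_max lexx !orbT.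
- by apply: le_trans Mn; rewrite /M !le_max lexx !orbT.
Qed.

(* Baire: the closed sets [closure (K n)] cover [B], so one has interior. *)
Let K_closure_ball : exists n x0 r, 0 < r /\
  forall u, `|u| < r -> closure (K n) (x0 + u).
Proof.
apply: contrapT => nH.
have : dense (\bigcap_i ~` closure (K i)).
  apply: Baire => i; split; first exact/closed_openC/closed_closure.
  move=> O [q Oq] opO.
  have /nbhs_normP [e e0 Oe] : nbhs q O by apply: open_nbhs_nbhs.
  apply: contrapT => nOF; apply: nH; exists i, q, e; split => // u ue.
  apply: contrapT => nc; apply: nOF; exists (q + u); split => //.
  by apply: Oe; rewrite /ball_ /= opprD addNKr normrN.
move=> /(_ setT (ex_intro _ 0 I) openT) [x [_ Fx]].
have [n Kx] := K_cover x; apply: (Fx n I); exact: subset_closure.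
Qed.

Lemma sublevel_diff_contains_ball : exists r N, 0 < r /\ forall x, `|x| < r ->
  exists y z, [/\ bounded_sublevel phi1 N y, bounded_sublevel phi2 N z & x = y - z].
Proof.
have [n0 [x0 [r0 [r00 x0r0]]]] := K_closure_ball.
have [m Km] := K_cover (- x0).
pose N := (maxn n0 m)%:R : R.
(* Averaging a point near [x0 + 2 w] with [- x0] gives a point near [w]. *)
have approx w : `|w| < r0 / 2 -> forall e, 0 < e -> exists y z,
    [/\ bounded_sublevel phi1 N y, bounded_sublevel phi2 N z & `|w - (y - z)| < e].
  move=> nw e e0.
  have n2w : `|2 *: w| < r0 by rewrite normrZ ger0_norm // -ltr_pdivlMl // mulrC.
  have [a' [Ka' ha']] : exists a', K n0 a' /\ `|x0 + 2 *: w - a'| < 2 * e.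
    have : nbhs (x0 + 2 *: w) [set y | `|x0 + 2 *: w - y| < 2 * e].
      by apply/nbhs_normP; exists (2 * e) => //; exact: mulr_gt0.
    by move/(x0r0 _ n2w) => [a [Ka xa]]; exists a.
  have half01 : 0 <= (2^-1 : R) <= 1 by rewrite invr_ge0 ler0n /= invf_le1 // ler1n.
  have [y [z [hy hz Ea]]] := K_convex half01 (K_le (leq_maxl n0 m) Ka')
    (K_le (leq_maxr n0 m) Km).
  exists y, z; split => //.
  rewrite -Ea (_ : 1 - 2^-1 = 2^-1 :> R); last by field.
  rewrite (_ : w - (2^-1 *: a' + 2^-1 *: - x0) = 2^-1 *: (x0 + 2 *: w - a')).
    by rewrite normrZ ger0_norm ?invr_ge0 ?ler0n // mulrC ltr_pdivrMr // mulrC.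
  rewrite scalerBr scalerDr scalerA mulVf ?pnatr_eq0 // scale1r scalerN.
  by rewrite opprD opprK addrC -addrA addrC.
have r4 : 0 < r0 / 2 by rewrite divr_gt0.
exists (r0 / 2 / 2), N; split; first by rewrite divr_gt0.
apply: (diff_contains_ball_of_approx (N := N) r4).
- exact: bounded_sublevel_convex.
- exact: bounded_sublevel_convex.
- exact: bounded_sublevel_closed.
- exact: bounded_sublevel_closed.
- by move=> y [].
- by move=> z [].
- by move=> w nw; apply: approx => //; exact: divr_gt0.
Qed.

End SublevelDifference.

Section FenchelBounds.
Variables (R : realType) (B : completeNormedModType R) (bf : B -> B -> R).
Variable h : B -> \bar R.
Hypothesis h_neqNy : forall b, h b != -oo%E.

Lemma fenchel_le x M : (forall b u, (h b <= u%:E)%E -> bf b x - u <= M) ->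
  (fenchel bf h x <= M%:E)%E.
Proof.
move=> H; apply: ge_ereal_sup => _ [b _ <-].
case E : (h b) => [v| |]; last by move: (h_neqNy b); rewrite E.
- by rewrite -EFinB lee_fin; apply: H; rewrite E.
- by rewrite /= leNye.
Qed.

Lemma fenchel_gt x a : (a%:E < fenchel bf h x)%E ->
  exists b u, (h b <= u%:E)%E /\ a < bf b x - u.
Proof.
move=> /ereal_sup_gt [_ [b _ <-]].
case E : (h b) => [v| |]; last by move: (h_neqNy b); rewrite E.
- by rewrite -EFinB lte_fin => h1; exists b, v; split => //; rewrite E.
- by rewrite /= ltNge leNye.
Qed.

End FenchelBounds.

Lemma lee_convex_comb (R : realType) (X Y : \bar R) (u1 u2 t : R) : 0 <= t <= 1 ->
  (X <= u1%:E)%E -> (Y <= u2%:E)%E ->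
  (t%:E * X + (1 - t)%:E * Y <= (t * u1 + (1 - t) * u2)%:E)%E.
Proof.
move=> /andP[t0 t1] hX hY; have t0' : 0 <= 1 - t by lra.
by apply: le_trans (leeD (lee_wpmul2l _ hX) (lee_wpmul2l _ hY)) _; rewrite ?lee_fin.
Qed.

Lemma convex_fun_comp (R : realType) (B : completeNormedModType R) (k : B -> \bar R)
    (s : B -> B) : convex_fun k ->
  (forall a b t, s (t *: a + (1 - t) *: b) = t *: s a + (1 - t) *: s b) ->
  convex_fun (fun z => k (s z)).
Proof. by move=> ck hs a b t t01; rewrite hs; exact: ck. Qed.

Lemma lower_semicontinuous_comp (R : realType) (B : completeNormedModType R)
    (k : B -> \bar R) (s : B -> B) :
  continuous s -> lower_semicontinuous k -> lower_semicontinuous (fun z => k (s z)).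
Proof.
move=> cs /lower_semicontinuousP lk; apply/lower_semicontinuousP => a.
by apply: (@open_comp _ _ s [set y | (a%:E < k y)%E]) => // x _; exact: cs.
Qed.

Section SSDBSpace.
Variables (R : realType) (B : completeNormedModType R) (bf : B -> B -> R).
Hypothesis bf_SSDB : is_SSDB bf.

Let bfC b c : bf b c = bf c b. Proof. by case: bf_SSDB => _ []. Qed.
Let bfD1 a b c : bf (a + b) c = bf a c + bf b c. Proof. by case: bf_SSDB => _ []. Qed.
Let bfZ1 (k : R) b c : bf (k *: b) c = k * bf b c. Proof. by case: bf_SSDB => _ []. Qed.
Let bfN1 a c : bf (- a) c = - bf a c. Proof. by rewrite -scaleN1r bfZ1 mulN1r. Qed.
Let bfB1 a b c : bf (a - b) c = bf a c - bf b c. Proof. by rewrite bfD1 bfN1. Qed.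
Let bfD2 a b c : bf c (a + b) = bf c a + bf c b. Proof. by rewrite bfC bfD1 !(bfC _ c). Qed.
Let bfN2 a c : bf c (- a) = - bf c a. Proof. by rewrite bfC bfN1 bfC. Qed.
Let bf_norm c b : `|bf b c| <= `|c| * `|b|.
Proof. by case: bf_SSDB => _ [_ _ _ /(_ c) [] + _]. Qed.
Let bf_onto (phi : B -> R) :
  (forall a b, phi (a + b) = phi a + phi b) -> (forall (k : R) b, phi (k *: b) = k * phi b) ->
  continuous phi -> exists c, forall b, phi b = bf b c.
Proof. by move: phi; case: bf_SSDB => _ []. Qed.

Let q := qf bf.
Let qD a b : q (a + b) = q a + q b + bf a b.
Proof. by rewrite /q /qf bfD1 !bfD2 (bfC b a); field. Qed.
Let qB a b : q (a - b) = q a + q b - bf a b.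
Proof. by rewrite qD /q /qf bfN1 bfN2 opprK bfN2. Qed.

Lemma SSDB_bfNl a b : bf (- a) b = - bf a b.
Proof. exact: bfN1. Qed.

Lemma SSDB_bfNr a b : bf a (- b) = - bf a b.
Proof. exact: bfN2. Qed.

Section KeyInequality.
Variables (f k : B -> \bar R) (c : B).
Hypotheses (f_convex : convex_fun f) (f_lsc : lower_semicontinuous f).
Hypotheses (k_convex : convex_fun k) (k_lsc : lower_semicontinuous k).
Hypothesis f_ge_q : forall y, ((q y)%:E <= f y)%E.
Hypothesis k_ge_Nq : forall z, ((- q z)%:E <= k z)%E.
Hypothesis dom_diff : forall x, exists y z,
  [/\ x = y - z, f y \is a fin_num & k z \is a fin_num].

(* [E] is the epigraph of [x |-> inf_y f y - bf y c + k (y - c - x)], which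
   is convex, at least [- q c] at [0] and bounded above near [0]; the
   functional [bf _ e] represents a subgradient of it at [0]. *)
Let E (x : B) (a : R) := exists y u w,
  [/\ (f y <= u%:E)%E, (k (y - c - x)%R <= w%:E)%E & u - bf y c + w <= a].

Let E_convex x1 x2 a1 a2 t : 0 <= t <= 1 -> E x1 a1 -> E x2 a2 ->
  E (t *: x1 + (1 - t) *: x2) (t * a1 + (1 - t) * a2).
Proof.
move=> t01 [y1 [u1 [w1 [f1 k1 h1]]]] [y2 [u2 [w2 [f2 k2 h2]]]].
exists (t *: y1 + (1 - t) *: y2), (t * u1 + (1 - t) * u2), (t * w1 + (1 - t) * w2); split.
- by apply: le_trans (f_convex y1 y2 t01) _; exact: lee_convex_comb.
- have -> : t *: y1 + (1 - t) *: y2 - c - (t *: x1 + (1 - t) *: x2) =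
      t *: (y1 - c - x1) + (1 - t) *: (y2 - c - x2).
    by rewrite convex_comb_subr opprD addrACA -!scalerBr.
  by apply: le_trans (k_convex _ _ t01) _; exact: lee_convex_comb.
- rewrite bfD1 !bfZ1; move/andP: t01 => [t0 t1]; have t0' : 0 <= 1 - t by lra.
  by have := ler_wpM2l t0 h1; have := ler_wpM2l t0' h2; nra.
Qed.

Let E_ge_at0 a : E 0 a -> - q c <= a.
Proof.
move=> [y [u [w [fy ky h]]]].
have := le_trans (f_ge_q y) fy; have := le_trans (k_ge_Nq _) ky.
by rewrite subr0 !lee_fin qB; lra.
Qed.

Let E_ball : exists r M, 0 < r /\ forall x, `|x| < r -> E x M.
Proof.
pose kc z := k (z - c).
have kc_dom x : exists y z, [/\ x = y - z, f y \is a fin_num & kc z \is a fin_num].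
  have [y [z [xcyz fy kz]]] := dom_diff (x + c).
  exists y, (z + c); split => //; last by rewrite /kc addrK.
  by rewrite opprD addrA -xcyz addrK.
have kc_convex : convex_fun kc by apply: convex_fun_comp => // *; exact: convex_comb_subr.
have kc_lsc : lower_semicontinuous kc.
  by apply: lower_semicontinuous_comp => // z; apply: cvgB; [exact: cvg_id | exact: cvg_cst].
have [r [N [r0 rN]]] := sublevel_diff_contains_ball f_convex kc_convex f_lsc kc_lsc kc_dom.
exists r, (N + `|c| * N + N); split => // x /rN [y [z [[fy ny] [kz nz] ->]]].
exists y, N, N; split => //.
- by rewrite opprB addrC addrA subrK.
- have := bf_norm c y; have := ler_wpM2l (normr_ge0 c) ny.
  have : - bf y c <= `|bf y c| by rewrite -normrN ler_norm.
  lra.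
Qed.

Lemma SSDB_key_inequality : exists e, forall y z u w,
  (f y <= u%:E)%E -> (k z <= w%:E)%E ->
  bf y (c + e) - u + (bf z (- e) - w) <= bf c e + q c.
Proof.
have [r [M [r0 rM]]] := E_ball.
have [l [ladd lscal lcont lminor]] := subgradient_at_zero E_convex E_ge_at0 r0 rM.
have [e le] := bf_onto ladd lscal lcont.
exists e => y z u w fy kz.
have : E (y - c - z) (u - bf y c + w).
  by exists y, u, w; split; rewrite // opprB addrC subrK.
by move/lminor; rewrite le !bfB1 bfD2 bfN2; lra.
Qed.

End KeyInequality.

Lemma BC_fenchel_gt (h : B -> \bar R) x eps : BC_fun bf h -> 0 < eps ->
  exists b u, (h b <= u%:E)%E /\ q x - eps < bf b x - u.
Proof.
move=> [[hN _] _ h_BC] e0; apply: fenchel_gt => //.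
have [h1 h2] := h_BC x; apply: lt_le_trans h1; apply: lt_le_trans h2.
by rewrite lte_fin /q; lra.
Qed.

Lemma BC_Pq_of_fenchel_le (h : B -> \bar R) x : BC_fun bf h ->
  (fenchel bf h x <= (q x)%:E)%E -> h x = (q x)%:E.
Proof.
move=> [_ _ /(_ x) [h1 h2]] hx.
by apply/eqP; rewrite eq_le h2 andbT; exact: le_trans h1 hx.
Qed.

Theorem SSDB_Pq_diff_full (f g : B -> \bar R) (s : B -> B) :
  BC_fun bf f -> lower_semicontinuous f -> BC_fun bf g -> lower_semicontinuous g ->
  (forall a b, s (a + b) = s a + s b) -> (forall (k : R) b, s (k *: b) = k *: s b) ->
  continuous s -> (forall b, exists z, s z = b) ->
  (forall a b, bf (s a) (s b) = bf a (- b)) ->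
  set_sub (dom f) (s @^-1` dom g) = [set: B] ->
  set_sub (Pq bf f) (s @^-1` Pq bf g) = [set: B].
Proof.
move=> f_BC f_lsc g_BC g_lsc sD sZ s_cont s_onto s_anti domT.
have [[fN _] f_convex f_ge] := f_BC; have [[gN _] g_convex g_ge] := g_BC.
have qs z : q (s z) = - q z by rewrite /q /qf s_anti bfN2 mulNr.
have k_convex : convex_fun (fun z => g (s z)).
  by apply: convex_fun_comp => // a b t; rewrite sD !sZ.
have k_ge_Nq z : ((- q z)%:E <= g (s z))%E by rewrite -qs; have [] := g_ge (s z).
have dom_diff x : exists y z,
    [/\ x = y - z, f y \is a fin_num & g (s z) \is a fin_num].
  have [y fy [z gz <-]] : set_sub (dom f) (s @^-1` dom g) x by rewrite domT.
  by exists y, z.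
apply/seteqP; split => // c _.
have [e key] := SSDB_key_inequality c f_convex f_lsc k_convex
  (lower_semicontinuous_comp s_cont g_lsc) (fun y => proj2 (f_ge y)) k_ge_Nq dom_diff.
exists (c + e); last (exists e; last by rewrite addrK).
  apply: BC_Pq_of_fenchel_le => //; apply/lee_addgt0Pr => eps e0.
  have [b [w [gw hb]]] := BC_fenchel_gt (s e) g_BC e0.
  have [z zb] := s_onto b; rewrite -zb qs s_anti in gw hb.
  rewrite -EFinD; apply: fenchel_le => // y u fy.
  by have := key y z u w fy gw; rewrite qD; lra.
apply: BC_Pq_of_fenchel_le => //; apply/lee_addgt0Pr => eps e0.
have [y [u [fy hy]]] := BC_fenchel_gt (c + e) f_BC e0.
rewrite -EFinD; apply: fenchel_le => // b w; have [z <-] := s_onto b => gw.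
by have := key y z u w fy gw; rewrite qD in hy; rewrite s_anti qs; lra.
Qed.

End SSDBSpace.

Lemma Pq_sub_dom (R : realType) (B : completeNormedModType R) (bf : B -> B -> R)
    (f : B -> \bar R) :
  Pq bf f `<=` dom f.
Proof. by move=> b; rewrite /Pq /dom /= => ->. Qed.

Section MinkowskiSums.
Variables (R : realType) (B : completeNormedModType R).
Implicit Types X Y : set B.

Lemma set_sub_subset X X' Y Y' : X `<=` X' -> Y `<=` Y' -> set_sub X Y `<=` set_sub X' Y'.
Proof. by move=> XX' YY' _ [x Xx [y Yy <-]]; exists x; [exact: XX' | exists y => //; exact: YY']. Qed.

Lemma set_add_subset X X' Y Y' : X `<=` X' -> Y `<=` Y' -> set_add X Y `<=` set_add X' Y'.
Proof. by move=> XX' YY' _ [x Xx [y Yy <-]]; exists x; [exact: XX' | exists y => //; exact: YY']. Qed.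

Lemma set_add_preimage X (r : B -> B) Y :
  set_add X (r @^-1` Y) = set_sub X ((fun z => r (- z)) @^-1` Y).
Proof.
apply/seteqP; split => _ [x Xx [y Yy <-]]; exists x => //.
  by exists (- y); rewrite /= ?opprK.
by exists (- y) => //; rewrite opprK.
Qed.

End MinkowskiSums.

Unset Implicit Arguments. Set Strict Implicit.

Theorem corollary4p7 (R : realType) (B : completeNormedModType R)
  (bf : B -> B -> R) (f g : B -> \bar R) (rho : B -> B) :
  is_SSDB bf ->
  BC_fun bf f -> lower_semicontinuous f ->
  BC_fun bf g -> lower_semicontinuous g ->
  (forall a b, rho (a + b) = rho a + rho b) ->
  (forall (k : R) b, rho (k *: b) = k *: rho b) ->
  continuous rho -> bijective rho ->
  (forall b c, bf (rho b) (rho c) = bf b (- c)) ->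
  (set_sub (dom f) (rho @^-1` dom g) = [set: B] <->
   set_sub (Pq bf f) (rho @^-1` Pq bf g) = [set: B]) /\
  (set_add (dom f) (rho @^-1` dom g) = [set: B] <->
   set_add (Pq bf f) (rho @^-1` Pq bf g) = [set: B]).
Proof.
move=> bfS f_BC f_lsc g_BC g_lsc rD rZ r_cont [r' rK r'K] r_anti.
have r_onto b : exists z, rho z = b by exists (r' b); rewrite r'K.
split; split => H.
- exact: SSDB_Pq_diff_full.
- by rewrite -subTset -H; apply: set_sub_subset => [|z /=]; exact: Pq_sub_dom.
- rewrite set_add_preimage in H; rewrite set_add_preimage.
  apply: (SSDB_Pq_diff_full bfS f_BC f_lsc g_BC g_lsc) H.
  + by move=> a b; rewrite opprD rD.
  + by move=> k b; rewrite -scalerN rZ.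
  + by move=> x; apply: continuous_comp; [exact: opp_continuous | exact: r_cont].
  + by move=> b; exists (- r' b); rewrite opprK r'K.
  + by move=> a b; rewrite r_anti opprK SSDB_bfNl // SSDB_bfNr.
- by rewrite -subTset -H; apply: set_add_subset => [|z /=]; exact: Pq_sub_dom.
Qed.
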